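(* Consider simultaneous two-player weighted congestion games with affine costs and uniform cost functions, where the player weights $w_1,w_2\ge 0$ (with $w_1+w_2>0$) are arbitrary. The price of anarchy (supremum over all weights and all instances, with respect to pure Nash equilibria) is equal to $1+2/\sqrt{3}\approx 2.155$, both for general congestion games and for network routing games. Moreover, for fixed weights the price of anarchy equals $1+2/\sqrt{3}$ when $w_1/w_2 = 1+\sqrt{3}$ and when $w_2/w_1 = 1+\sqrt{3}$.
   Context: A weighted two-player congestion game with affine costs consists of a finite set $R$ of resources, coefficients $\alpha_r,\beta_r \geq 0$ for each $r\in R$, two players $i=1,2$ with weights $w_i\ge 0$, and for each player $i$ a nonempty finite set $\mathcal{A}_i \subseteq 2^R$ of actions. For an action profile $A=(A_1,A_2)$ the load of $r$ is $x_r(A)=\sum_{j:\, r\in A_j} w_j$. With uniform costs, player $i$ pays $C_i(A)=\sum_{r\in A_i}(\alpha_r+\beta_r x_r(A))$. The social cost is $C(A)=C_1(A)+C_2(A)$. In a network routing game, $R$ is the arc set of a directed graph, player $i$ has a source $s_i$ and sink $t_i$, and $\mathcal{A}_i$ is the set of arc sets of directed $s_i$–$t_i$ paths. A profile $(A_1^*,A_2^* )$ is a (pure) Nash equilibrium if no player can lower her cost by unilaterally changing her action. The price of anarchy of an instance is the maximum over Nash equilibria $A$ of $C(A)/\min_{A'} C(A')$; the price of anarchy of a class is the supremum over all instances in the class (with positive optimal social cost). *)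

From HB Require Import structures.
From mathcomp Require Import all_boot all_order all_algebra.
From mathcomp Require Import reals.
Set Implicit Arguments. Unset Strict Implicit. Unset Printing Implicit Defensive.
Import Order.TTheory GRing.Theory Num.Theory.
Local Open Scope ring_scope.

Record cgame (R : realType) := CGame {
  cg_res : finType;
  cg_alpha : cg_res -> R;
  cg_beta : cg_res -> R;
  cg_w1 : R;
  cg_w2 : R;
  cg_acts1 : {set {set cg_res}};
  cg_acts2 : {set {set cg_res}}
}.
Arguments cg_res {R} c.
Arguments cg_alpha {R} c _.
Arguments cg_beta {R} c _.
Arguments cg_w1 {R} c.
Arguments cg_w2 {R} c.
Arguments cg_acts1 {R} c.
Arguments cg_acts2 {R} c.

Section Games.
Variable R : realType.
Variable g : cgame R.

Definition valid : Prop :=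
  (forall r, 0 <= cg_alpha g r) /\ (forall r, 0 <= cg_beta g r) /\
  0 <= cg_w1 g /\ 0 <= cg_w2 g /\ 0 < cg_w1 g + cg_w2 g /\
  cg_acts1 g != set0 /\ cg_acts2 g != set0.

Definition load (A1 A2 : {set cg_res g}) (r : cg_res g) : R :=
  (if r \in A1 then cg_w1 g else 0) + (if r \in A2 then cg_w2 g else 0).

Definition cost1 (A1 A2 : {set cg_res g}) : R :=
  \sum_(r in A1) (cg_alpha g r + cg_beta g r * load A1 A2 r).
Definition cost2 (A1 A2 : {set cg_res g}) : R :=
  \sum_(r in A2) (cg_alpha g r + cg_beta g r * load A1 A2 r).
Definition social (A1 A2 : {set cg_res g}) : R := cost1 A1 A2 + cost2 A1 A2.

Definition feasible (A1 A2 : {set cg_res g}) : Prop :=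
  A1 \in cg_acts1 g /\ A2 \in cg_acts2 g.

Definition is_NE (A1 A2 : {set cg_res g}) : Prop :=
  feasible A1 A2 /\
  (forall B1, B1 \in cg_acts1 g -> cost1 A1 A2 <= cost1 B1 A2) /\
  (forall B2, B2 \in cg_acts2 g -> cost2 A1 A2 <= cost2 A1 B2).

Definition is_opt (B1 B2 : {set cg_res g}) : Prop :=
  feasible B1 B2 /\
  (forall C1 C2, feasible C1 C2 -> social B1 B2 <= social C1 C2).
End Games.
Arguments load {R} g A1 A2 r.
Arguments cost1 {R} g A1 A2.
Arguments cost2 {R} g A1 A2.
Arguments social {R} g A1 A2.
Arguments feasible {R} g A1 A2.
Arguments is_NE {R} g A1 A2.
Arguments is_opt {R} g B1 B2.
Arguments valid {R} g.

(* Directed (multi)graph with arcs = resources: tl e -> hd e.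
   [walk tl hd u t p] : the arc sequence p is a directed walk from u to t. *)
Fixpoint walk (V T : finType) (tl hd : T -> V) (u t : V) (p : seq T) : bool :=
  match p with
  | [::] => u == t
  | e :: p' => (tl e == u) && walk tl hd (hd e) t p'
  end.

Definition is_st_path_set (V T : finType) (tl hd : T -> V) (s t : V)
    (P : {set T}) : Prop :=
  exists p : seq T, [&& walk tl hd s t p, uniq (s :: map hd p) &
                       P == [set e in p]].

Definition is_network (R : realType) (g : cgame R) : Prop :=
  exists (V : finType) (tl hd : cg_res g -> V) (s1 t1 s2 t2 : V),
    (forall P, P \in cg_acts1 g <-> is_st_path_set tl hd s1 t1 P) /\
    (forall P, P \in cg_acts2 g <-> is_st_path_set tl hd s2 t2 P).

Definition fixed_weights (R : realType) (w1 w2 : R) (g : cgame R) : Prop :=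
  cg_w1 g = w1 /\ cg_w2 g = w2.

(* The price of anarchy of the class C (sup over valid instances in C with
   positive optimal social cost, and over their pure NE) equals rho:
   rho is an upper bound and is approached arbitrarily closely. *)
Definition poa_upper (R : realType) (C : cgame R -> Prop) (rho : R) : Prop :=
  forall g : cgame R, C g -> valid g ->
  forall A1 A2 B1 B2 : {set cg_res g},
    is_NE g A1 A2 -> is_opt g B1 B2 -> 0 < social g B1 B2 ->
    social g A1 A2 <= rho * social g B1 B2.

Definition poa_lower (R : realType) (C : cgame R -> Prop) (rho : R) : Prop :=
  forall eps : R, 0 < eps ->
  exists g : cgame R, C g /\ valid g /\
  exists A1 A2 B1 B2 : {set cg_res g},
    [/\ is_NE g A1 A2, is_opt g B1 B2, 0 < social g B1 B2 &
        (rho - eps) * social g B1 B2 < social g A1 A2].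

Definition poa_eq (R : realType) (C : cgame R -> Prop) (rho : R) : Prop :=
  poa_upper C rho /\ poa_lower C rho.

From HB Require Import structures.
From mathcomp Require Import all_boot all_order all_algebra.
From mathcomp Require Import reals.
From mathcomp Require Import ring lra.
Set Implicit Arguments. Unset Strict Implicit. Unset Printing Implicit Defensive.
Import Order.TTheory GRing.Theory Num.Theory.
Local Open Scope ring_scope.

(* Upper bound: for w1 >= w2, add the two equilibrium conditions with weights
   rho w1 and w1 + w2. The resulting inequality splits over resources, and each
   resource term is affine in the cost coefficients of the resource: its
   constant part is nonnegative as soon as rho >= 2, and its linear part is a
   finite case check whose binding case is the quadratic form [poa_quad]. For
   rho = 1 + 2/sqrt 3 that form is a perfect square up to a positive factor.
   The case w1 < w2 follows by swapping the players.
   Lower bound: in the network with arcs S1->S2->M->T1, M->T2 and S2->T2->T1,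
   player 1 routing from S1 to T1 and player 2 from S2 to T2, and weights with
   w1/w2 = 1 + sqrt 3, the equilibrium (P_lower, Q_zigzag) costs exactly rho
   times the optimum (P_upper, Q_direct). *)

Definition poa_quad {R : realType} (rho a b : R) : R :=
  (rho - 1) * b ^+ 2 + (rho - 3) * a * b + (rho - 2) * a ^+ 2.

Section ResourceGap.
Context {R : realType} (rho a b : R).

Definition wload (u v : bool) : R := (if u then a else 0) + (if v then b else 0).

Definition rcost (al be : R) (i : bool) (l : R) : R := if i then al + be * l else 0.

(* Contribution of one resource with costs al + be * load, used by (x1, x2) in
   the equilibrium and by (y1, y2) in the comparison profile. *)
Definition gap (al be : R) (x1 x2 y1 y2 : bool) : R :=
  let c i l := rcost al be i l in
  (a + b) * (rho * (c y1 (wload y1 y2) + c y2 (wload y1 y2))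
             - (c x1 (wload x1 x2) + c x2 (wload x1 x2)))
  - rho * a * (c y1 (wload y1 x2) - c x1 (wload x1 x2))
  - (a + b) * (c y2 (wload x1 y2) - c x2 (wload x1 x2)).

Lemma gap_affine al be x1 x2 y1 y2 :
  gap al be x1 x2 y1 y2 = al * gap 1 0 x1 x2 y1 y2 + be * gap 0 1 x1 x2 y1 y2.
Proof. by case: x1; case: x2; case: y1; case: y2; rewrite /gap /rcost /wload /=; ring. Qed.

Lemma gap_const_ge0 x1 x2 y1 y2 : 2 <= rho -> 0 <= b <= a ->
  0 <= gap 1 0 x1 x2 y1 y2.
Proof.
move=> rho_ge2 /andP[b_ge0 b_le_a].
have h1 : 0 <= rho * b by apply: mulr_ge0; lra.
have h2 : 0 <= (rho - 1) * (a + b) by apply: mulr_ge0; lra.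
have h3 : 0 <= (rho - 2) * a by apply: mulr_ge0; lra.
by case: x1; case: x2; case: y1; case: y2; rewrite /gap /rcost /wload /=; lra.
Qed.

Lemma gap_linear_ge0 x1 x2 y1 y2 : 2 <= rho -> 0 <= b <= a ->
  0 <= poa_quad rho a b -> 0 <= gap 0 1 x1 x2 y1 y2.
Proof.
rewrite /poa_quad => rho_ge2 /andP[b_ge0 b_le_a] quad_ge0.
have r2 : 0 <= rho - 2 by lra.
have a0 : 0 <= a by lra.
have r2aa := mulr_ge0 (mulr_ge0 r2 a0) a0.
have r2ab := mulr_ge0 (mulr_ge0 r2 a0) b_ge0.
have r2bb := mulr_ge0 (mulr_ge0 r2 b_ge0) b_ge0.
by case: x1; case: x2; case: y1; case: y2; rewrite /gap /rcost /wload /=; nra.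
Qed.

Lemma gap_ge0 al be x1 x2 y1 y2 : 2 <= rho -> 0 <= b <= a ->
  0 <= poa_quad rho a b -> 0 <= al -> 0 <= be -> 0 <= gap al be x1 x2 y1 y2.
Proof.
move=> rho_ge2 ba quad al_ge0 be_ge0; rewrite gap_affine.
by rewrite addr_ge0 // mulr_ge0 // ?gap_const_ge0 ?gap_linear_ge0.
Qed.

End ResourceGap.

Section UpperBound.
Context {R : realType}.
Implicit Types (g : cgame R) (rho : R).

Lemma cost1E g (A1 A2 : {set cg_res g}) :
  cost1 g A1 A2 = \sum_r rcost (cg_alpha g r) (cg_beta g r) (r \in A1)
                            (wload (cg_w1 g) (cg_w2 g) (r \in A1) (r \in A2)).
Proof. exact: big_mkcond. Qed.

Lemma cost2E g (A1 A2 : {set cg_res g}) :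
  cost2 g A1 A2 = \sum_r rcost (cg_alpha g r) (cg_beta g r) (r \in A2)
                            (wload (cg_w1 g) (cg_w2 g) (r \in A1) (r \in A2)).
Proof. exact: big_mkcond. Qed.

Lemma social_gapE rho g (A1 A2 B1 B2 : {set cg_res g}) :
  let a := cg_w1 g in let b := cg_w2 g in
  (a + b) * (rho * social g B1 B2 - social g A1 A2)
  - rho * a * (cost1 g B1 A2 - cost1 g A1 A2)
  - (a + b) * (cost2 g A1 B2 - cost2 g A1 A2)
  = \sum_r gap rho a b (cg_alpha g r) (cg_beta g r)
             (r \in A1) (r \in A2) (r \in B1) (r \in B2).
Proof.
rewrite /social !cost1E !cost2E /gap.
do 4! rewrite ?sumrB ?big_split -?mulr_sumr /=.
ring.
Qed.

Lemma social_NE_le_sorted rho g (A1 A2 B1 B2 : {set cg_res g}) :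
  2 <= rho -> 0 <= poa_quad rho (cg_w1 g) (cg_w2 g) -> valid g ->
  cg_w2 g <= cg_w1 g -> is_NE g A1 A2 -> feasible g B1 B2 ->
  social g A1 A2 <= rho * social g B1 B2.
Proof.
move=> rho_ge2 quad [al_ge0 [be_ge0 [w1_ge0 [w2_ge0 [w_gt0 _]]]]] w21.
move=> [_ [NE1 NE2]] [B1_in B2_in].
move: (social_gapE rho A1 A2 B1 B2) => /= gapE.
set a := cg_w1 g in w1_ge0 w_gt0 w21 quad gapE *.
set b := cg_w2 g in w2_ge0 w_gt0 w21 quad gapE *.
have gap_sum_ge0 : 0 <= \sum_r gap rho a b (cg_alpha g r) (cg_beta g r)
                             (r \in A1) (r \in A2) (r \in B1) (r \in B2).
  by apply: sumr_ge0 => r _; apply: gap_ge0; rewrite ?w2_ge0.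
have dev1 : 0 <= rho * a * (cost1 g B1 A2 - cost1 g A1 A2).
  by rewrite !mulr_ge0 ?subr_ge0 ?NE1 //; lra.
have dev2 : 0 <= (a + b) * (cost2 g A1 B2 - cost2 g A1 A2).
  by rewrite mulr_ge0 ?subr_ge0 ?NE2 //; lra.
have : 0 <= (a + b) * (rho * social g B1 B2 - social g A1 A2) by lra.
by rewrite pmulr_rge0 // subr_ge0.
Qed.

Definition swap_game g : cgame R :=
  CGame (cg_alpha g) (cg_beta g) (cg_w2 g) (cg_w1 g) (cg_acts2 g) (cg_acts1 g).

Lemma load_swap g A B r : load (swap_game g) A B r = load g B A r.
Proof. by rewrite /load /= addrC. Qed.

Lemma cost1_swap g A B : cost1 (swap_game g) A B = cost2 g B A.
Proof. by apply: eq_bigr => r _; rewrite load_swap. Qed.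

Lemma cost2_swap g A B : cost2 (swap_game g) A B = cost1 g B A.
Proof. by apply: eq_bigr => r _; rewrite load_swap. Qed.

Lemma social_swap g A B : social (swap_game g) A B = social g B A.
Proof. by rewrite /social cost1_swap cost2_swap addrC. Qed.

Lemma valid_swap g : valid g -> valid (swap_game g).
Proof. by move=> [? [? [? [? [? [? ?]]]]]]; rewrite /valid /= addrC. Qed.

Lemma NE_swap g A B : is_NE g B A -> is_NE (swap_game g) A B.
Proof.
move=> [[B_in A_in] [NE1 NE2]]; split; first by split.
by split=> C C_in; rewrite ?cost1_swap ?cost2_swap; [apply: NE2 | apply: NE1].
Qed.

Lemma opt_swap g A B : is_opt g B A -> is_opt (swap_game g) A B.
Proof.
move=> [[B_in A_in] opt]; split; first by split.
by move=> C1 C2 [C1_in C2_in]; rewrite !social_swap; apply: opt.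
Qed.

Lemma social_NE_le rho g (A1 A2 B1 B2 : {set cg_res g}) :
  2 <= rho -> (forall a b : R, 0 <= b <= a -> 0 <= poa_quad rho a b) ->
  valid g ->
  is_NE g A1 A2 -> feasible g B1 B2 ->
  social g A1 A2 <= rho * social g B1 B2.
Proof.
move=> rho_ge2 quad gP NE [B1_in B2_in].
have [_ [_ [w1_ge0 [w2_ge0 _]]]] := gP.
have [w21 | /ltW w12] := leP (cg_w2 g) (cg_w1 g).
  by apply: social_NE_le_sorted => //; apply: quad; rewrite w2_ge0.
rewrite -!(@social_swap g); apply: social_NE_le_sorted => //.
- by apply: quad; rewrite /= w1_ge0.
- exact: valid_swap.
- exact: NE_swap.
Qed.

End UpperBound.

Section SqrtThree.
Context {R : realType}.

Lemma poa_quad_ge0 (c a b : R) : 0 < c -> 3 * c ^+ 2 = 4 ->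
  0 <= poa_quad (1 + c) a b.
Proof.
move=> c_gt0 c2; rewrite -(pmulr_rge0 _ (_ : 0 < 4 * c)); last by lra.
have -> : 4 * c * poa_quad (1 + c) a b = (2 * c * b + (c - 2) * a) ^+ 2.
  by rewrite /poa_quad; nra.
exact: sqr_ge0.
Qed.

Lemma sqrt3_gt0 : 0 < Num.sqrt (3 : R).
Proof. by rewrite sqrtr_gt0 ltr0n. Qed.

Lemma sqrt3_sq : Num.sqrt (3 : R) ^+ 2 = 3.
Proof. by rewrite sqr_sqrtr // ler0n. Qed.

Lemma two_div_sqrt3_sq : 3 * (2 / Num.sqrt (3 : R)) ^+ 2 = 4.
Proof.
by rewrite expr_div_n sqrt3_sq mulrC divfK ?pnatr_eq0 // expr2; lra.
Qed.

Lemma poa_upper_sqrt3 (C : cgame R -> Prop) : poa_upper C (1 + 2 / Num.sqrt 3).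
Proof.
have c_gt0 : 0 < 2 / Num.sqrt (3 : R) by rewrite divr_gt0 ?sqrt3_gt0.
have rho_ge2 : 2 <= 1 + 2 / Num.sqrt (3 : R).
  by have := two_div_sqrt3_sq; nra.
move=> g _ gP A1 A2 B1 B2 NE [B_feas _] _.
apply: social_NE_le => // a b _.
exact: poa_quad_ge0 c_gt0 two_div_sqrt3_sq.
Qed.

End SqrtThree.

Lemma poa_lower_of_tight {R : realType} (C : cgame R -> Prop) (rho : R) g
    (A1 A2 B1 B2 : {set cg_res g}) :
  C g -> valid g -> is_NE g A1 A2 -> is_opt g B1 B2 -> 0 < social g B1 B2 ->
  social g A1 A2 = rho * social g B1 B2 -> poa_lower C rho.
Proof.
move=> Cg gP NE opt opt_gt0 tight eps eps_gt0.
exists g; split=> //; split=> //; exists A1, A2, B1, B2; split=> //.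
by rewrite tight ltr_pM2r // gtrBl.
Qed.

Inductive vertex := S1 | S2 | M | T2 | T1.

Definition ord_of_vertex (v : vertex) : 'I_5 :=
  match v with
  | S1 => @Ordinal 5 0 isT | S2 => @Ordinal 5 1 isT | M => @Ordinal 5 2 isT
  | T2 => @Ordinal 5 3 isT | T1 => @Ordinal 5 4 isT
  end.
Definition vertex_of_ord (i : 'I_5) : vertex :=
  match val i with 0 => S1 | 1 => S2 | 2 => M | 3 => T2 | _ => T1 end%N.
Lemma ord_of_vertexK : cancel ord_of_vertex vertex_of_ord.
Proof. by case. Qed.
HB.instance Definition _ := Finite.copy vertex (can_type ord_of_vertexK).

Inductive arc := S1S2 | S2M | MT1 | MT2 | S2T2 | T2T1.

Definition ord_of_arc (e : arc) : 'I_6 :=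
  match e with
  | S1S2 => @Ordinal 6 0 isT | S2M => @Ordinal 6 1 isT | MT1 => @Ordinal 6 2 isT
  | MT2 => @Ordinal 6 3 isT | S2T2 => @Ordinal 6 4 isT | T2T1 => @Ordinal 6 5 isT
  end.
Definition arc_of_ord (i : 'I_6) : arc :=
  match val i with
  | 0 => S1S2 | 1 => S2M | 2 => MT1 | 3 => MT2 | 4 => S2T2 | _ => T2T1
  end%N.
Lemma ord_of_arcK : cancel ord_of_arc arc_of_ord.
Proof. by case. Qed.
HB.instance Definition _ := Finite.copy arc (can_type ord_of_arcK).

Definition tail (e : arc) : vertex :=
  match e with S1S2 => S1 | S2M | S2T2 => S2 | MT1 | MT2 => M | T2T1 => T2 end.
Definition head (e : arc) : vertex :=
  match e with S1S2 => S2 | S2M => M | MT1 | T2T1 => T1 | MT2 | S2T2 => T2 end.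

Definition P_upper : seq arc := [:: S1S2; S2M; MT1].
Definition P_zigzag : seq arc := [:: S1S2; S2M; MT2; T2T1].
Definition P_lower : seq arc := [:: S1S2; S2T2; T2T1].
Definition Q_zigzag : seq arc := [:: S2M; MT2].
Definition Q_direct : seq arc := [:: S2T2].

Lemma walk_S1T1 p : walk tail head S1 T1 p -> p \in [:: P_upper; P_zigzag; P_lower].
Proof. by do 5! case: p => [|[] p] //=. Qed.

Lemma walk_S2T2 p : walk tail head S2 T2 p -> p \in [:: Q_zigzag; Q_direct].
Proof. by do 4! case: p => [|[] p] //=. Qed.

Section NetworkInstance.
Context {R : realType} (a b : R).

Definition arcs (p : seq arc) : {set arc} := [set e in p].

(* The weight of MT2 makes both players indifferent between their equilibrium
   and their optimal path. *)
Definition zigzag_beta : R := (a ^+ 2 + a * b + b ^+ 2) / b.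

Definition net_beta (e : arc) : R :=
  match e with
  | S2M => a
  | S2T2 => a + b
  | MT2 => zigzag_beta
  | _ => 0
  end.

Definition net_game : cgame R :=
  @CGame R arc (fun _ => 0) net_beta a b
    [set arcs P_upper; arcs P_zigzag; arcs P_lower]
    [set arcs Q_zigzag; arcs Q_direct].

Lemma net_game_network : is_network net_game.
Proof.
exists vertex, tail, head, S1, T1, S2, T2; split=> P; split.
- rewrite !inE => /orP[/orP[]|] /eqP ->;
    [exists P_upper | exists P_zigzag | exists P_lower]; by rewrite /= eqxx.
- case=> p /and3P[/walk_S1T1 + _ /eqP ->].
  by rewrite !inE => /or3P[] /eqP ->; rewrite eqxx ?orbT.
- rewrite !inE => /orP[] /eqP ->;
    [exists Q_zigzag | exists Q_direct]; by rewrite /= eqxx.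
- case=> p /and3P[/walk_S2T2 + _ /eqP ->].
  by rewrite !inE => /orP[] /eqP ->; rewrite eqxx ?orbT.
Qed.

Lemma zigzag_betaE : 0 < b -> zigzag_beta * b = a ^+ 2 + a * b + b ^+ 2.
Proof. by move=> b_gt0; rewrite divfK // gt_eqF. Qed.

Lemma zigzag_beta_ge0 : 0 < a -> 0 < b -> 0 <= zigzag_beta.
Proof. by move=> a_gt0 b_gt0; apply: divr_ge0; nra. Qed.

Lemma net_game_valid : 0 < a -> 0 < b -> valid net_game.
Proof.
move=> a_gt0 b_gt0; split=> //; split.
  by case=> //=; [lra | exact: zigzag_beta_ge0 | lra].
rewrite /=; do 3 (split; first lra); split; apply/set0Pn.
- by exists (arcs P_upper); rewrite !inE eqxx.
- by exists (arcs Q_zigzag); rewrite !inE eqxx.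
Qed.

Lemma sum_arcs (p : seq arc) (F : arc -> R) : uniq p ->
  \sum_(e in arcs p) F e = \sum_(e <- p) F e.
Proof. by move=> p_uniq; rewrite big_uniq //; apply: eq_bigl => e; rewrite inE. Qed.

Ltac eval_costs :=
  rewrite /social /cost1 /cost2 /= !sum_arcs // !big_cons !big_nil /load /= !inE /=.

Lemma net_game_NE : 0 < a -> 0 < b -> is_NE net_game (arcs P_lower) (arcs Q_zigzag).
Proof.
move=> a_gt0 b_gt0.
have Kb := zigzag_betaE b_gt0; have K_ge0 := zigzag_beta_ge0 a_gt0 b_gt0.
split; first by split; rewrite !inE eqxx ?orbT.
split=> C; rewrite !inE.
- by case/orP=> [/orP[] |] /eqP ->; eval_costs; nra.
- by case/orP=> /eqP ->; eval_costs; nra.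
Qed.

Lemma net_game_opt : 0 < a -> 0 < b -> is_opt net_game (arcs P_upper) (arcs Q_direct).
Proof.
move=> a_gt0 b_gt0.
have Kb := zigzag_betaE b_gt0; have K_ge0 := zigzag_beta_ge0 a_gt0 b_gt0.
split; first by split; rewrite !inE eqxx ?orbT.
move=> C1 C2 [] /=; rewrite !inE.
by case/orP=> [/orP[] |] /eqP -> /orP[] /eqP ->; eval_costs; nra.
Qed.

Lemma net_social_opt :
  social net_game (arcs P_upper) (arcs Q_direct) = a ^+ 2 + a * b + b ^+ 2.
Proof. by eval_costs; ring. Qed.

Lemma net_social_NE : 0 < b ->
  social net_game (arcs P_lower) (arcs Q_zigzag) = 2 * a ^+ 2 + 3 * a * b + b ^+ 2.
Proof. by move=> /zigzag_betaE; eval_costs; lra. Qed.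

End NetworkInstance.

Section LowerBound.
Context {R : realType}.

Lemma sqrt3_tight_ratio (a b : R) : a = (1 + Num.sqrt 3) * b ->
  2 * a ^+ 2 + 3 * a * b + b ^+ 2 = (1 + 2 / Num.sqrt 3) * (a ^+ 2 + a * b + b ^+ 2).
Proof.
move=> ->; have q_neq0 := lt0r_neq0 (@sqrt3_gt0 R).
have q2 := @sqrt3_sq R; set q := Num.sqrt 3 in q_neq0 q2 *.
have q_rho : q * (1 + 2 / q) = q + 2 by rewrite mulrDr mulr1 mulrCA mulfV // mulr1.
apply: (mulfI q_neq0); rewrite [RHS]mulrA q_rho.
have q2b : q ^+ 2 * b ^+ 2 = 3 * b ^+ 2 by rewrite q2.
have q3b : q ^+ 3 * b ^+ 2 = 3 * q * b ^+ 2 by rewrite exprSr q2 mulrC !mulrA.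
lra.
Qed.

Lemma net_game_poa_lower (C : cgame R -> Prop) (a b : R) :
  0 < b -> a = (1 + Num.sqrt 3) * b -> C (net_game a b) ->
  poa_lower C (1 + 2 / Num.sqrt 3).
Proof.
move=> b_gt0 a_def Cg.
have a_gt0 : 0 < a by rewrite a_def mulr_gt0 // addr_gt0 ?sqrt3_gt0.
apply: (poa_lower_of_tight Cg (net_game_valid a_gt0 b_gt0)
          (net_game_NE a_gt0 b_gt0) (net_game_opt a_gt0 b_gt0)).
  by rewrite net_social_opt; nra.
by rewrite net_social_NE // net_social_opt sqrt3_tight_ratio.
Qed.

Lemma swap_net_game_poa_lower (C : cgame R -> Prop) (a b : R) :
  0 < b -> a = (1 + Num.sqrt 3) * b -> C (swap_game (net_game a b)) ->
  poa_lower C (1 + 2 / Num.sqrt 3).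
Proof.
move=> b_gt0 a_def Cg.
have a_gt0 : 0 < a by rewrite a_def mulr_gt0 // addr_gt0 ?sqrt3_gt0.
apply: (poa_lower_of_tight Cg (valid_swap (net_game_valid a_gt0 b_gt0))
          (NE_swap (net_game_NE a_gt0 b_gt0)) (opt_swap (net_game_opt a_gt0 b_gt0))).
  by rewrite social_swap net_social_opt; nra.
by rewrite !social_swap net_social_NE // net_social_opt sqrt3_tight_ratio.
Qed.

End LowerBound.

Theorem corollary1 (R : realType) :
  let rho : R := 1 + 2 / Num.sqrt 3 in
  [/\ poa_eq (fun _ : cgame R => True) rho,
      poa_eq (@is_network R) rho,
      (forall w1 w2 : R, 0 < w2 -> w1 = (1 + Num.sqrt 3) * w2 ->
         poa_eq (fixed_weights w1 w2) rho) &
      (forall w1 w2 : R, 0 < w1 -> w2 = (1 + Num.sqrt 3) * w1 ->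
         poa_eq (fixed_weights w1 w2) rho)].
Proof.
move=> rho; have ratio : 1 + Num.sqrt 3 = (1 + Num.sqrt (3 : R)) * 1 by rewrite mulr1.
split.
- split; first exact: poa_upper_sqrt3.
  exact: (net_game_poa_lower ltr01 ratio).
- split; first exact: poa_upper_sqrt3.
  exact: (net_game_poa_lower ltr01 ratio (net_game_network _ _)).
- move=> w1 w2 w2_gt0 w1_def; split; first exact: poa_upper_sqrt3.
  exact: net_game_poa_lower w2_gt0 w1_def _.
- move=> w1 w2 w1_gt0 w2_def; split; first exact: poa_upper_sqrt3.
  exact: swap_net_game_poa_lower w1_gt0 w2_def _.
Qed.
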